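(* Let $W$ be a Wigner function on $\mathbb{R}^2$ with marginals $\rho_x(x)=\int W(x,p)\,dp$ and $\rho_p(p)=\int W(x,p)\,dx$ (probability densities). Let $W^+=\max\{W,0\}$, $W^-=-\min\{W,0\}$, and $\rho_x^\pm(x)=\int W^\pm(x,p)\,dp$, $\rho_p^\pm(p)=\int W^\pm(x,p)\,dx$. Assuming all entropies below are finite, $$h(\rho_x)\ge h(\rho_x^+)-h(\rho_x^-),\qquad h(\rho_p)\ge h(\rho_p^+)-h(\rho_p^-).$$
   Context: For a non-negative integrable (not necessarily normalized) function $f$ on $\mathbb{R}^k$, $h(f)=-\int f\ln f$ (with $0\ln0=0$). Note $\rho_x=\rho_x^+-\rho_x^-$ and $\rho_p=\rho_p^+-\rho_p^-$. *)

From HB Require Import structures.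
From mathcomp Require Import all_boot all_order all_algebra.
From mathcomp Require Import all_classical all_reals all_analysis.
Set Implicit Arguments. Unset Strict Implicit. Unset Printing Implicit Defensive.
Import Order.TTheory GRing.Theory Num.Theory.
Import numFieldNormedType.Exports.
Local Open Scope classical_set_scope.
Local Open Scope ring_scope.

Section Defs.
Variable R : realType.
Notation leb := (@lebesgue_measure R).

(* A wave function psi = u + i v on R, normalized in L^2. *)
Definition pure_state (u v : R -> R) : Prop :=
  measurable_fun [set: R] u /\ measurable_fun [set: R] v /\
  leb.-integrable [set: R] (fun x => ((u x) ^+ 2 + (v x) ^+ 2)%:E) /\
  (\int[leb]_x ((u x) ^+ 2 + (v x) ^+ 2)%:E = 1)%E.

(* Wigner function of a pure state psi = u + i v (hbar = 1):
   W(x,p) = (1/pi) Int conj(psi(x+y)) psi(x-y) e^{2ipy} dy,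
   written out as the real part (the imaginary part vanishes). *)
Definition wigner_pure (u v : R -> R) (x p : R) : R :=
  pi^-1 * Rintegral leb [set: R] (fun y =>
    (u (x + y) * u (x - y) + v (x + y) * v (x - y)) * cos (2 * p * y)
    - (u (x + y) * v (x - y) - v (x + y) * u (x - y)) * sin (2 * p * y)).

(* Wigner function of a (possibly mixed) state rho = sum_k lam_k |psi_k><psi_k|. *)
Definition is_wigner (W : R -> R -> R) : Prop :=
  exists (lam : nat -> R) (u v : nat -> R -> R),
    (forall k, 0 <= lam k) /\
    series lam @ \oo --> (1 : R) /\
    (forall k, pure_state (u k) (v k)) /\
    (forall x p, series (fun k => lam k * wigner_pure (u k) (v k) x p) @ \oo
                   --> W x p).

Definition posp (W : R -> R -> R) x p : R := Num.max (W x p) 0.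
Definition negp (W : R -> R -> R) x p : R := - Num.min (W x p) 0.

Definition marg_x (W : R -> R -> R) (x : R) : R := Rintegral leb [set: R] (W x).
Definition marg_p (W : R -> R -> R) (p : R) : R :=
  Rintegral leb [set: R] (fun x => W x p).

(* differential entropy h(f) = - Int f ln f (ln 0 = 0 in mathcomp, so 0 ln 0 = 0) *)
Definition entropy (f : R -> R) : \bar R :=
  (\int[leb]_x (- (f x * ln (f x)))%:E)%E.

Definition finite_entropy (f : R -> R) : Prop :=
  leb.-integrable [set: R] (fun x => (f x * ln (f x))%:E).

Definition prob_density (f : R -> R) : Prop :=
  (forall x, 0 <= f x) /\ leb.-integrable [set: R] (fun x => (f x)%:E) /\
  (\int[leb]_x (f x)%:E = 1)%E.

End Defs.

From HB Require Import structures.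
From mathcomp Require Import all_boot all_order all_algebra.
From mathcomp Require Import all_classical all_reals all_analysis.
Import Order.TTheory GRing.Theory Num.Theory.
Import numFieldNormedType.Exports.
Local Open Scope classical_set_scope.
Local Open Scope ring_scope.

(* Since ln is nondecreasing, t ln t is superadditive on [0, oo).  With
   rho = rho^+ - rho^- and rho^- >= 0 this gives, pointwise,
   rho^+ ln rho^+ >= rho ln rho + rho^- ln rho^-, and integrating yields
   h(rho) >= h(rho^+) - h(rho^-).  That rho_x = rho_x^+ - rho_x^- is the
   splitting of the integral of W(x, .) into its positive and negative parts. *)

Lemma xlnx_superadditive (R : realType) (a b : R) : 0 <= a -> 0 <= b ->
  a * ln a + b * ln b <= (a + b) * ln (a + b).
Proof.
rewrite le_eqVlt => /orP[/eqP<-|a0]; first by rewrite (ln0 (lexx 0)) mulr0 !add0r.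
rewrite le_eqVlt => /orP[/eqP<-|b0]; first by rewrite (ln0 (lexx 0)) mulr0 !addr0.
have ab0 : 0 < a + b by rewrite addr_gt0.
rewrite mulrDl; apply: lerD; apply: ler_wpM2l; try exact: ltW.
- by rewrite ler_ln ?posrE // lerDl ltW.
- by rewrite ler_ln ?posrE // lerDr ltW.
Qed.

Section Entropy.
Variable R : realType.
Notation leb := (@lebesgue_measure R).

Lemma integrable_entropy (f : R -> R) : finite_entropy f ->
  leb.-integrable [set: R] (fun x => (- (f x * ln (f x)))%:E).
Proof.
by move=> /integrableN; apply: eq_integrable => // x _ /=; rewrite EFinN.
Qed.

Lemma entropy_fin_num (f : R -> R) : finite_entropy f -> entropy f \is a fin_num.
Proof. by move=> hf; apply: integrable_fin_num => //; exact: integrable_entropy. Qed.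

Lemma entropy_subr_le (f fp fn : R -> R) :
  (forall x, f x = fp x - fn x) -> (forall x, 0 <= f x) -> (forall x, 0 <= fn x) ->
  finite_entropy f -> finite_entropy fp -> finite_entropy fn ->
  (entropy fp - entropy fn <= entropy f)%E.
Proof.
move=> fE f0 fn0 hf hfp hfn.
rewrite leeBlDr; last exact: entropy_fin_num.
rewrite /entropy -integralD //; try exact: integrable_entropy.
apply: le_integral => //; first exact: integrable_entropy.
  by apply: integrableD => //; exact: integrable_entropy.
move=> x _; rewrite -EFinD lee_fin.
have -> : fp x = f x + fn x by rewrite fE subrK.
by rewrite -opprD lerN2; exact: xlnx_superadditive.
Qed.

End Entropy.

Section PositiveNegativeParts.
Context {d : measure_display} {T : measurableType d} {R : realType}
  {mu : {measure set T -> \bar R}}.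

Lemma integrable_max0 (g : T -> R) : mu.-integrable [set: T] (EFin \o g) ->
  mu.-integrable [set: T] (fun t => (Num.max (g t) 0)%:E).
Proof.
move=> /(integrable_funepos measurableT); apply: eq_integrable => // t _.
by rewrite funeposE EFin_max.
Qed.

Lemma integrable_oppr_min0 (g : T -> R) : mu.-integrable [set: T] (EFin \o g) ->
  mu.-integrable [set: T] (fun t => (- Num.min (g t) 0)%:E).
Proof.
move=> /(integrable_funeneg measurableT); apply: eq_integrable => // t _.
by rewrite funenegE oppr_min oppr0 EFin_max EFinN.
Qed.

Lemma Rintegral_max0_min0 (g : T -> R) : mu.-integrable [set: T] (EFin \o g) ->
  Rintegral mu [set: T] g =
  Rintegral mu [set: T] (fun t => Num.max (g t) 0) -
  Rintegral mu [set: T] (fun t => - Num.min (g t) 0).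
Proof.
move=> hg; rewrite -RintegralB //; last first.
- exact: integrable_oppr_min0.
- exact: integrable_max0.
congr Rintegral; apply/funext => t; rewrite opprK.
by case: (leP (g t) 0) => gt;
  rewrite ?(max_r gt) ?(min_l gt) ?(max_l (ltW gt)) ?(min_r (ltW gt)) ?add0r ?addr0.
Qed.

End PositiveNegativeParts.

Section Marginals.
Variables (R : realType) (W : R -> R -> R).
Notation leb := (@lebesgue_measure R).

(* The measure must be given: [leb] lives on a measurable structure on [R]
   whose display differs from the canonical one. *)
Lemma marg_x_posp_negp :
  (forall x, leb.-integrable [set: R] (fun p => (W x p)%:E)) ->
  forall x, marg_x W x = marg_x (posp W) x - marg_x (negp W) x.
Proof.
by move=> hW x; rewrite /marg_x (@Rintegral_max0_min0 _ _ _ leb (W x) (hW x)).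
Qed.

Lemma marg_p_posp_negp :
  (forall p, leb.-integrable [set: R] (fun x => (W x p)%:E)) ->
  forall p, marg_p W p = marg_p (posp W) p - marg_p (negp W) p.
Proof.
by move=> hW p; rewrite /marg_p (@Rintegral_max0_min0 _ _ _ leb (W^~ p) (hW p)).
Qed.

Lemma negp_ge0 x p : 0 <= negp W x p.
Proof. by rewrite /negp oppr_ge0 ge_min lexx orbT. Qed.

Lemma marg_x_negp_ge0 x : 0 <= marg_x (negp W) x.
Proof. by apply: Rintegral_ge0 => p _; exact: negp_ge0. Qed.

Lemma marg_p_negp_ge0 p : 0 <= marg_p (negp W) p.
Proof. by apply: Rintegral_ge0 => x _; exact: negp_ge0. Qed.

End Marginals.

Theorem mainTheorem10 (R : realType) (W : R -> R -> R) :
  is_wigner W ->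
  (forall x, (@lebesgue_measure R).-integrable [set: R] (fun p => (W x p)%:E)) ->
  (forall p, (@lebesgue_measure R).-integrable [set: R] (fun x => (W x p)%:E)) ->
  prob_density (marg_x W) -> prob_density (marg_p W) ->
  finite_entropy (marg_x W) -> finite_entropy (marg_x (posp W)) ->
  finite_entropy (marg_x (negp W)) ->
  finite_entropy (marg_p W) -> finite_entropy (marg_p (posp W)) ->
  finite_entropy (marg_p (negp W)) ->
  (entropy (marg_x (posp W)) - entropy (marg_x (negp W)) <= entropy (marg_x W))%E /\
  (entropy (marg_p (posp W)) - entropy (marg_p (negp W)) <= entropy (marg_p W))%E.
Proof.
move=> _ hWx hWp [rhox0 _] [rhop0 _] hx hxp hxn hp hpp hpn; split.
- apply: entropy_subr_le => //; last exact: marg_x_negp_ge0.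
  exact: marg_x_posp_negp.
- apply: entropy_subr_le => //; last exact: marg_p_negp_ge0.
  exact: marg_p_posp_negp.
Qed.
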